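(* Let $\pi$ be a projective plane of order $q$, and let $n,s,t\in\mathbb{N}$ be such that $q=(n+1)^2$ and $q\ge s,t>q-n$. Then, for $s\ne t$, \[ n_\pi(K_{s,t})=2\binom{q^2+q+1}{2}\binom{q}{s}\binom{q}{t}, \] and \[ n_\pi(K_{s,s})=\binom{q^2+q+1}{2}\binom{q}{s}^2. \]
   Context: $K_{s,t}$ is the complete bipartite graph with classes of sizes $s,t$. A finite projective plane of order $q$ has $q^2+q+1$ points and lines, $q+1$ points on each line and $q+1$ lines through each point; any two distinct points lie on a unique line and any two lines meet in a unique point. An embedding of a simple graph $G=(V,E)$ into $\pi$ is an injective map $\phi$ from $V$ to the points of $\pi$ such that the induced map sending an edge $ab$ to the line through $\phi(a),\phi(b)$ is injective on $E$. Two embeddings $\phi,\psi$ are equivalent if $\psi=\phi\circ\alpha$ for some graph automorphism $\alpha$ of $G$; $n_\pi(G)$ is the number of equivalence classes (equivalently, the number of distinct images of $G$ in $\pi$). *)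

From mathcomp Require Import all_boot all_order all_fingroup.
Set Implicit Arguments. Unset Strict Implicit. Unset Printing Implicit Defensive.

Section Defs.
Variables (P L : finType) (inc : P -> L -> bool).

Definition is_proj_plane (q : nat) : Prop :=
  [/\ #|P| = q ^ 2 + q + 1 /\ #|L| = q ^ 2 + q + 1,
      (forall l : L, #|[set p : P | inc p l]| = q.+1),
      (forall p : P, #|[set l : L | inc p l]| = q.+1),
      (forall p1 p2 : P, p1 != p2 -> exists! l : L, inc p1 l && inc p2 l) &
      (forall l1 l2 : L, l1 != l2 -> exists! p : P, inc p l1 && inc p l2)].

Definition lineof (a b : P) : option L := [pick l | inc a l && inc b l].

Variables (V : finType) (e : rel V).

(* embedding: injective on vertices, and the induced edge -> line map
   (edges being unordered pairs {x,y} with e x y) is injective *)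
Definition embedding (phi : {ffun V -> P}) : bool :=
  injectiveb phi &&
  [forall x, forall y, forall u, forall v,
     [&& e x y, e u v & lineof (phi x) (phi y) == lineof (phi u) (phi v)] ==>
     (((x == u) && (y == v)) || ((x == v) && (y == u)))].

Definition graph_aut (a : {perm V}) : bool :=
  [forall x, forall y, e (a x) (a y) == e x y].

Definition emb_class (phi : {ffun V -> P}) : {set {ffun V -> P}} :=
  [set psi : {ffun V -> P} |
     [exists a : {perm V}, graph_aut a && (psi == [ffun x => phi (a x)])]].

Definition n_pi : nat :=
  #|[set emb_class phi | phi in [set phi : {ffun V -> P} | embedding phi]]|.

End Defs.

Definition Kst (s t : nat) : rel ('I_s + 'I_t)%type :=
  fun x y => match x, y with
             | inl _, inr _ | inr _, inl _ => true
             | _, _ => false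
             end.
Arguments Kst s t : clear implicits.

From mathcomp Require Import all_boot all_order all_fingroup.
From mathcomp Require Import zify.
Set Implicit Arguments. Unset Strict Implicit. Unset Printing Implicit Defensive.

(* Let A and B be the images of the two sides of an embedded K_{s,t}. As distinct edges
   give distinct lines, a line through a point of A meets B at most once, and vice versa.
   Through a point a of A, the |B| >= q + 1 - n lines towards B then leave at most n lines
   meeting A again; if A were not collinear, each of them would contain at most n points
   of A, so |A| <= n (n - 1) + 1 < s. Hence A lies on a line l1 and B on a line l2, and
   neither set meets the other line. Conversely every such pair (A, B) comes from an
   embedding, and two embeddings are equivalent exactly when they give the same unordered
   pair {A, B}. Counting ordered pairs of distinct lines and the choices of A and B among
   the q points of each line off the other gives the formula, halved when s = t because
   (A, B) and (B, A) then define the same class. *)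

Section ProjectivePlane.
Variables (P L : finType) (inc : P -> L -> bool) (q : nat).
Hypothesis plane : is_proj_plane inc q.

Definition pts (l : L) : {set P} := [set p | inc p l].

Lemma line_uniq a b l l' :
  a != b -> inc a l -> inc b l -> inc a l' -> inc b l' -> l = l'.
Proof.
case: plane => _ _ _ join _ ab al bl al' bl'.
have [l1 [_ U]] := join a b ab.
by rewrite -(U l) ?al ?bl // -(U l') ?al' ?bl'.
Qed.

Lemma card_lines : #|L| = q ^ 2 + q + 1.
Proof. by case: plane => [[_ ->]]. Qed.

Lemma card_lines_through a : #|[set l | inc a l]| = q.+1.
Proof. by case: plane => _ _ ->. Qed.

Lemma card_pts l : #|pts l| = q.+1.
Proof. by case: plane => _ ->. Qed.

Lemma card_ptsD l1 l2 : l1 != l2 -> #|pts l1 :\: pts l2| = q.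
Proof.
move=> l12; case: plane => _ _ _ _ meet; have [p [p12 U]] := meet l1 l2 l12.
have I1 : pts l1 :&: pts l2 = [set p].
  by apply/setP => x; rewrite !inE; apply/idP/eqP => [/U ->|->].
have := cardsID (pts l2) (pts l1); rewrite I1 cards1 card_pts; lia.
Qed.

Lemma lineof_inc a b l : lineof inc a b = Some l -> inc a l && inc b l.
Proof. by rewrite /lineof; case: pickP => // l1 H [<-]. Qed.

Lemma lineof_eq a b l : a != b -> inc a l -> inc b l -> lineof inc a b = Some l.
Proof.
move=> ab al bl; rewrite /lineof; case: pickP => [l1 /andP [al1 bl1]|none].
  by rewrite (line_uniq ab al1 bl1 al bl).
by have := none l; rewrite al bl.
Qed.

Lemma pts_line_uniq (A : {set P}) l l' :
  1 < #|A| -> A \subset pts l -> A \subset pts l' -> l = l'.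
Proof.
move=> /card_gt1P [a [b [aA bA ab]]] /subsetP sAl /subsetP sAl'.
move: (sAl a aA) (sAl b bA) (sAl' a aA) (sAl' b bA); rewrite !inE.
exact: line_uniq.
Qed.

Lemma lineof_some a b : a != b -> exists l, [/\ lineof inc a b = Some l, inc a l & inc b l].
Proof.
move=> ab; case: plane => _ _ _ join _; have [l [/andP [al bl] _]] := join a b ab.
by exists l; rewrite (lineof_eq ab al bl).
Qed.

Definition meet_once (A B : {set P}) : Prop :=
  forall a b b' l, a \in A -> b \in B -> b' \in B ->
    inc a l -> inc b l -> inc b' l -> b = b'.

Section Collinear.
Variable l0 : L.

(* [l0] is only a default: [ln a b] is the line through [a] and [b] when [a != b]. *)
Definition ln a b : L := odflt l0 (lineof inc a b).

Lemma ln_inc a b : a != b -> inc a (ln a b) && inc b (ln a b).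
Proof. by move=> /lineof_some [l [lab al bl]]; rewrite /ln lab al bl. Qed.

Variables (A B : {set P}) (n : nat).
Hypotheses (disjAB : [disjoint A & B]) (onceAB : meet_once A B) (onceBA : meet_once B A).
Hypothesis bigB : q.+1 <= #|B| + n.

(* Through [a], the [#|B|] lines towards [B] and the secants of [A] are distinct. *)
Lemma card_secants_le a : a \in A -> #|[set ln a x | x in A :\ a]| <= n.
Proof.
move=> aA; have aB : a \notin B by rewrite (disjointFr disjAB).
have aneqB b : b \in B -> a != b by apply: contraTneq => <-.
have aneqx x : x != a -> a != x by rewrite eq_sym.
have cardB : #|[set ln a b | b in B]| = #|B|.
  apply: card_in_imset => b b' bB b'B E.
  have /andP [ab bab] := ln_inc (aneqB b bB); have /andP [_ b'ab'] := ln_inc (aneqB b' b'B).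
  by apply: (onceAB aA bB b'B ab bab); rewrite E.
have disj : [disjoint [set ln a x | x in A :\ a] & [set ln a b | b in B]].
  rewrite -setI_eq0; apply/eqP/setP => l; rewrite !inE.
  apply/andP => -[/imsetP [x /setD1P [xa xA] ->] /imsetP [b bB E]].
  have /andP [ax xax] := ln_inc (aneqx _ xa).
  have /andP [_ bab] := ln_inc (aneqB b bB).
  have xEa : x = a by apply: (onceBA bB xA aA _ xax ax); rewrite E.
  by rewrite xEa eqxx in xa.
have sub : [set ln a x | x in A :\ a] :|: [set ln a b | b in B] \subset [set l | inc a l].
  apply/subsetP => l; rewrite !inE => /orP [] /imsetP [x].
    by move=> /setD1P [xa _] ->; case/andP: (ln_inc (aneqx _ xa)).
  by move=> xB ->; case/andP: (ln_inc (aneqB x xB)).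
have := subset_leq_card sub; rewrite card_lines_through cardsU (disjoint_setI0 disj).
rewrite cards0 cardB; lia.
Qed.

Lemma card_meet_le m : ~~ (A \subset pts m) -> #|A :&: pts m| <= n.
Proof.
move=> /subsetPn [a aA]; rewrite inE => am.
have aneq x : x \in A :&: pts m -> a != x.
  by rewrite !inE => /andP [_ xm]; apply: contraNneq am => ->.
rewrite -(card_in_imset (f := ln a)); last first.
  move=> x y xAm yAm E; apply/eqP/negPn/negP => xy.
  have /andP [ax xax] := ln_inc (aneq x xAm); have /andP [_ yay] := ln_inc (aneq y yAm).
  move: xAm yAm yay; rewrite !inE -E => /andP [_ xm] /andP [_ ym] yay.
  by move: am; rewrite -(line_uniq xy xax yay xm ym) ax.
apply: leq_trans (card_secants_le aA); apply/subset_leq_card/subsetP => l /imsetP [x xAm ->].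
apply: imset_f; rewrite !inE eq_sym aneq //; by case/setIP: xAm.
Qed.

(* The secants through a point of [A] partition the rest of [A]. *)
Lemma collinear : n * n.-1 < #|A|.-1 -> exists l, A \subset pts l.
Proof.
move=> bigA; case: (boolP [exists l, A \subset pts l]) => [/existsP //|/existsPn offline].
have /card_gt0P [a aA] : 0 < #|A| by lia.
have ax x : x \in A :\ a -> a != x by rewrite !inE eq_sym => /andP [].
suff : #|A :\ a| <= n * n.-1 by have := cardsD1 a A; rewrite aA; lia.
rewrite -sum1_card (partition_big_imset (ln a)) /=.
apply: (@leq_trans (\sum_(m in [set ln a x | x in A :\ a]) n.-1)).
  apply: leq_sum => m /imsetP [x0 x0A ->]; rewrite sum1dep_card.
  have /andP [al _] := ln_inc (ax x0 x0A).
  apply: (@leq_trans #|(A :&: pts (ln a x0)) :\ a|).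
    apply/subset_leq_card/subsetP => x; rewrite !inE => /andP [/andP [xa xA] /eqP <-].
    have ax' : a != x by rewrite eq_sym.
    by rewrite xa xA; case/andP: (ln_inc ax').
  have := cardsD1 a (A :&: pts (ln a x0)); rewrite !inE aA al.
  have := card_meet_le (offline (ln a x0)); lia.
by rewrite sum_nat_const leq_mul2r card_secants_le ?orbT.
Qed.

End Collinear.

Definition split_on_lines (A B : {set P}) : bool :=
  [exists l1, exists l2,
    [&& l1 != l2, A \subset pts l1 :\: pts l2 & B \subset pts l2 :\: pts l1]].

Lemma split_on_linesC A B : split_on_lines A B = split_on_lines B A.
Proof.
by apply/existsP/existsP => -[l1 /existsP [l2 /and3P [l12 sA sB]]];
  exists l2; apply/existsP; exists l1; rewrite eq_sym l12 sA sB.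
Qed.

Lemma split_meet_once (A B : {set P}) l1 l2 :
  A \subset pts l1 :\: pts l2 -> B \subset pts l2 :\: pts l1 -> meet_once A B.
Proof.
move=> /subsetP sA /subsetP sB a b b' l aA bB b'B al bl b'l.
apply/eqP/negPn/negP => bb'.
move: (sA a aA) (sB b bB) (sB b' b'B); rewrite !inE.
move=> /andP [al2 _] /andP [_ bl2] /andP [_ b'l2].
by move: al2; rewrite -(line_uniq bb' bl b'l bl2 b'l2) al.
Qed.

Lemma split_disjoint (A B : {set P}) : split_on_lines A B -> [disjoint A & B].
Proof.
move=> /existsP [l1 /existsP [l2 /and3P [_ /subsetP sA /subsetP sB]]].
apply/pred0P => x /=; apply/negbTE/negP => /andP [/sA + /sB]; rewrite !inE.
by case/andP => /negP + _ /andP [_].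
Qed.

Lemma meet_once_split (A B : {set P}) n :
  [disjoint A & B] -> meet_once A B -> meet_once B A ->
  q.+1 <= #|A| + n -> q.+1 <= #|B| + n ->
  n * n.-1 < #|A|.-1 -> n * n.-1 < #|B|.-1 -> split_on_lines A B.
Proof.
move=> disj onceAB onceBA bigA bigB manyA manyB.
have disj' : [disjoint B & A] by rewrite disjoint_sym.
have /card_gt0P [l0 _] : 0 < #|L| by rewrite card_lines; lia.
have [l1 /subsetP A1] := collinear l0 disj onceAB onceBA bigB manyA.
have [l2 /subsetP B2] := collinear l0 disj' onceBA onceAB bigA manyB.
have /card_gt1P [a1 [a2 [a1A a2A a12]]] : 1 < #|A| by lia.
have /card_gt1P [b1 [b2 [b1B b2B b12]]] : 1 < #|B| by lia.
have A_off_l2 x : x \in A -> ~~ inc x l2.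
  move=> xA; apply/negP => xl2; move/eqP: b12; apply.
  by move: (B2 _ b1B) (B2 _ b2B); rewrite !inE; exact: onceAB xA b1B b2B xl2.
have B_off_l1 x : x \in B -> ~~ inc x l1.
  move=> xB; apply/negP => xl1; move/eqP: a12; apply.
  by move: (A1 _ a1A) (A1 _ a2A); rewrite !inE; exact: onceBA xB a1A a2A xl1.
apply/existsP; exists l1; apply/existsP; exists l2.
have l12 : l1 != l2.
  by apply: contraNneq (A_off_l2 _ a1A) => <-; have := A1 _ a1A; rewrite inE.
rewrite l12 /=; apply/andP; split; apply/subsetP => x xS; rewrite !inE.
  by rewrite A_off_l2 //; have := A1 _ xS; rewrite inE.
by rewrite B_off_l1 //; have := B2 _ xS; rewrite inE.
Qed.

End ProjectivePlane.

Section CompleteBipartite.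
Variables (T : finType) (s t : nat).
Local Notation V := ('I_s + 'I_t)%type.

Definition side (c : bool) : {set V} := [set x | is_inl x == c].

Definition sides_image (phi : {ffun V -> T}) : {set T} * {set T} :=
  (phi @: side true, phi @: side false).

Definition upair (AB : {set T} * {set T}) : {set {set T}} := [set AB.1; AB.2].

Definition sides_pair (phi : {ffun V -> T}) := upair (sides_image phi).

Definition pair_class (X : {set {set T}}) : {set {ffun V -> T}} :=
  [set chi : {ffun V -> T} | injectiveb chi && (sides_pair chi == X)].

Lemma KstE (x y : V) : Kst s t x y = is_inl x (+) is_inl y.
Proof. by case: x; case: y. Qed.

Lemma Kst_opp (x y : V) : Kst s t x y -> is_inl y = ~~ is_inl x.
Proof. by rewrite KstE; case: (is_inl x); case: (is_inl y). Qed.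

Lemma Kst_inj_neq (phi : {ffun V -> T}) x y : injective phi -> Kst s t x y -> phi x != phi y.
Proof. by move=> iphi; apply: contraTneq => /iphi ->; rewrite KstE addbb. Qed.

Lemma card_side_true : #|side true| = s.
Proof.
have -> : side true = [set inl i | i : 'I_s].
  apply/setP => [[i|j]]; rewrite !inE /=; apply/esym.
    by apply/imsetP; exists i.
  by apply/negbTE/negP => /imsetP [i _].
by rewrite card_imset ?card_ord // => i j [].
Qed.

Lemma card_side_false : #|side false| = t.
Proof.
have -> : side false = [set inr j | j : 'I_t].
  apply/setP => [[i|j]]; rewrite !inE /=; apply/esym.
    by apply/negbTE/negP => /imsetP [j _].
  by apply/imsetP; exists j.
by rewrite card_imset ?card_ord // => i j [].
Qed.

Lemma upair_inj (A B C D : {set T}) :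
  upair (A, B) = upair (C, D) -> (A = C /\ B = D) \/ (A = D /\ B = C).
Proof.
rewrite /upair /= => E.
have : A \in [set C; D] by rewrite -E !inE eqxx.
have : B \in [set C; D] by rewrite -E !inE eqxx orbT.
have : C \in [set A; B] by rewrite E !inE eqxx.
have : D \in [set A; B] by rewrite E !inE eqxx orbT.
rewrite !inE => /orP [] /eqP DE /orP [] /eqP CE /orP [] /eqP BE /orP [] /eqP AE;
  subst; by [left | right].
Qed.

Lemma graph_aut_side (a : {perm V}) :
  graph_aut (Kst s t) a -> exists c, forall x, is_inl (a x) = c (+) is_inl x.
Proof.
move=> /forallP aut.
have same x y : is_inl (a x) (+) is_inl x = is_inl (a y) (+) is_inl y.
  move: (aut x) => /forallP /(_ y) /eqP; rewrite !KstE.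
  by case: (is_inl (a x)); case: (is_inl x); case: (is_inl (a y)); case: (is_inl y).
case: (pickP (fun _ : V => true)) => [x0 _|V0]; last by exists false => x; have := V0 x.
by exists (is_inl (a x0) (+) is_inl x0) => x; rewrite (same x0 x) addbK.
Qed.

Lemma sides_pair_aut (phi : {ffun V -> T}) (a : {perm V}) :
  graph_aut (Kst s t) a -> sides_pair [ffun x => phi (a x)] = sides_pair phi.
Proof.
move=> /graph_aut_side [c ac].
have img b : [ffun x => phi (a x)] @: side b = phi @: side (c (+) b).
  have -> : side (c (+) b) = a @: side b.
    apply/setP => y; rewrite inE; apply/eqP/imsetP => [Ey|[x]].
      exists ((a^-1)%g y); last by rewrite permKV.
      by have := ac ((a^-1)%g y); rewrite permKV Ey inE => /addbI ->.
    by rewrite inE => /eqP <- ->.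
  by rewrite -imset_comp; apply: eq_imset => x; rewrite ffunE.
rewrite /sides_pair /sides_image /upair /= !img; clear img ac.
by case: c => //=; apply: setUC.
Qed.

Lemma sides_pair_eq_aut (phi psi : {ffun V -> T}) : injective phi -> injective psi ->
  sides_pair psi = sides_pair phi ->
  exists2 a : {perm V}, graph_aut (Kst s t) a & psi = [ffun x => phi (a x)].
Proof.
move=> iphi ipsi E.
have [c img] : exists c, forall b, psi @: side b = phi @: side (c (+) b).
  by case: (upair_inj E) => -[E1 E2]; [exists false | exists true]; case.
have preimage x : exists y, (is_inl y == c (+) is_inl x) && (phi y == psi x).
  have : psi x \in psi @: side (is_inl x) by apply: imset_f; rewrite inE.
  by rewrite img => /imsetP [y]; rewrite inE => sy phiy; exists y; rewrite sy -phiy eqxx.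
pose g x := odflt x [pick y | phi y == psi x].
have gP x : phi (g x) = psi x /\ is_inl (g x) = c (+) is_inl x.
  have [y /andP [/eqP side_y /eqP phi_y]] := preimage x.
  rewrite /g; case: pickP => [z /eqP phi_z|none]; last by have := none y; rewrite phi_y eqxx.
  by rewrite /= (iphi _ _ (etrans phi_z (esym phi_y))).
have ginj : injective g.
  by move=> x y gxy; apply: ipsi; rewrite -(proj1 (gP x)) -(proj1 (gP y)) gxy.
exists (perm ginj).
  apply/forallP => x; apply/forallP => y; rewrite !KstE !permE (proj2 (gP x)) (proj2 (gP y)).
  by case: (c); case: (is_inl x); case: (is_inl y).
by apply/ffunP => x; rewrite ffunE permE (proj1 (gP x)).
Qed.

Lemma emb_classE (phi : {ffun V -> T}) : injective phi ->
  emb_class (Kst s t) phi = pair_class (sides_pair phi).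
Proof.
move=> iphi; apply/setP => chi; rewrite !inE.
apply/existsP/andP => [[a /andP [aut /eqP ->]]|[/injectiveP ichi /eqP E]].
  rewrite sides_pair_aut // eqxx; split=> //.
  by apply/injectiveP => x y; rewrite !ffunE => /iphi /perm_inj.
by have [a aut ->] := sides_pair_eq_aut iphi ichi E; exists a; rewrite aut eqxx.
Qed.

Lemma sides_image_surj (A B : {set T}) : #|A| = s -> #|B| = t -> [disjoint A & B] ->
  exists2 phi : {ffun V -> T}, injective phi & sides_image phi = (A, B).
Proof.
move=> cardA cardB disj.
pose phi : {ffun V -> T} := [ffun x => match x with
  | inl i => enum_val (cast_ord (esym cardA) i)
  | inr j => enum_val (cast_ord (esym cardB) j) end].
have phiA i : phi (inl i) \in A by rewrite ffunE; apply: enum_valP.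
have phiB j : phi (inr j) \in B by rewrite ffunE; apply: enum_valP.
have AB i j : phi (inl i) != phi (inr j).
  by apply: contraTneq (phiA i) => ->; rewrite (disjointFl disj (phiB j)).
exists phi.
  case=> [i|j] [i'|j'] E.
  - by move: E; rewrite !ffunE => /enum_val_inj /cast_ord_inj ->.
  - by move: (AB i j'); rewrite E eqxx.
  - by move: (AB i' j); rewrite E eqxx.
  - by move: E; rewrite !ffunE => /enum_val_inj /cast_ord_inj ->.
rewrite /sides_image; congr pair; apply/setP => p; apply/imsetP/idP.
- by case=> -[i|j]; rewrite inE // => _ ->.
- move=> pA; exists (inl (cast_ord cardA (enum_rank_in pA p))); first by rewrite inE.
  by rewrite ffunE cast_ordK enum_rankK_in.
- by case=> -[i|j]; rewrite inE // => _ ->.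
- move=> pB; exists (inr (cast_ord cardB (enum_rank_in pB p))); first by rewrite inE.
  by rewrite ffunE cast_ordK enum_rankK_in.
Qed.

End CompleteBipartite.

Section Embeddings.
Variables (P L : finType) (inc : P -> L -> bool) (q : nat).
Hypothesis plane : is_proj_plane inc q.
Variables (s t : nat).
Local Notation V := ('I_s + 'I_t)%type.
Local Notation embeddings := [set phi : {ffun V -> P} | embedding inc (Kst s t) phi].

Lemma n_pi_Kst : n_pi inc (Kst s t) = #|[set sides_pair phi | phi in embeddings]|.
Proof.
have classE : {in embeddings, emb_class (Kst s t) =1 pair_class s t \o @sides_pair P s t}.
  by move=> phi; rewrite inE => /andP [/injectiveP iphi _]; apply: emb_classE.
rewrite /n_pi (eq_in_imset classE) imset_comp card_in_imset //.
move=> X Y /imsetP [phi emb_phi ->] _ E.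
have : phi \in pair_class s t (sides_pair phi).
  by move: emb_phi; rewrite !inE eqxx andbT => /andP [].
by rewrite E inE => /andP [_ /eqP].
Qed.

Lemma embedding_meet_once (phi : {ffun V -> P}) c : embedding inc (Kst s t) phi ->
  meet_once inc (phi @: side s t c) (phi @: side s t (~~ c)).
Proof.
move=> /andP [/injectiveP iphi /forallP emb] a b b' l.
move=> /imsetP [x xc ->] /imsetP [y yc ->] /imsetP [y' y'c ->] xl yl y'l.
move: xc yc y'c; rewrite !inE => /eqP xc /eqP yc /eqP y'c.
have edge z : is_inl z = ~~ c -> Kst s t x z by move=> zc; rewrite KstE xc zc addbN addbb.
move: (emb x) => /forallP /(_ y) /forallP /(_ x) /forallP /(_ y') /implyP.
rewrite !edge // (lineof_eq plane (Kst_inj_neq iphi (edge y yc)) xl yl).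
rewrite (lineof_eq plane (Kst_inj_neq iphi (edge y' y'c)) xl y'l).
rewrite !eqxx => /(_ isT) /orP [/eqP -> //|/andP [/eqP xy' _]].
by move: y'c; rewrite -xy' xc; case: (c).
Qed.

Lemma meet_once_embedding (phi : {ffun V -> P}) : injective phi ->
  (forall c, meet_once inc (phi @: side s t c) (phi @: side s t (~~ c))) ->
  embedding inc (Kst s t) phi.
Proof.
move=> iphi once; rewrite /embedding; apply/andP; split; first exact/injectiveP.
apply/forallP => x; apply/forallP => y; apply/forallP => u; apply/forallP => v.
apply/implyP => /and3P [exy euv /eqP xy_uv].
have [m [lxy xm ym]] := lineof_some plane (Kst_inj_neq iphi exy).
have /andP [um vm] := lineof_inc (etrans (esym xy_uv) lxy).
have same_side z w z' w' : Kst s t z w -> Kst s t z' w' -> is_inl z = is_inl z' ->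
    inc (phi z) m -> inc (phi w) m -> inc (phi z') m -> inc (phi w') m -> z = z' /\ w = w'.
  move=> ezw ez'w' zz' zm wm z'm w'm.
  have mem b r : is_inl r = b -> phi r \in phi @: side s t b.
    by move=> rb; rewrite imset_f ?inE ?rb.
  have wc : is_inl w = ~~ is_inl z by apply: Kst_opp.
  have w'c : is_inl w' = ~~ is_inl z by rewrite zz'; apply: Kst_opp.
  split; apply: iphi.
    apply: (once (~~ is_inl z) _ _ _ m (mem _ _ wc)) => //; apply: mem; rewrite ?negbK //.
  exact: (once (is_inl z) _ _ _ m (mem _ _ erefl) (mem _ _ wc) (mem _ _ w'c)).
case: (eqVneq (is_inl x) (is_inl u)) => [xu|xu].
  by have [-> ->] := same_side x y u v exy euv xu xm ym um vm; rewrite !eqxx.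
have xv : is_inl x = is_inl v.
  by move: xu; rewrite (Kst_opp euv); case: (is_inl x); case: (is_inl u).
have evu : Kst s t v u by rewrite KstE addbC -KstE.
by have [-> ->] := same_side x y v u exy evu xv xm ym vm um; rewrite !eqxx orbT.
Qed.

Definition split_pairs : {set {set P} * {set P}} :=
  [set AB : {set P} * {set P} |
    [&& #|AB.1| == s, #|AB.2| == t & split_on_lines inc AB.1 AB.2]].

Lemma sides_image_embeddings n :
  q.+1 <= s + n -> q.+1 <= t + n -> n * n.-1 < s.-1 -> n * n.-1 < t.-1 ->
  [set sides_image phi | phi in embeddings] = split_pairs.
Proof.
move=> bigs bigt manys manyt; apply/setP => -[A B]; rewrite inE /=; apply/imsetP/idP.
  case=> phi; rewrite inE => emb [-> ->].
  have iphi : injective phi by case/andP: emb => /injectiveP.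
  rewrite !card_imset // card_side_true card_side_false !eqxx /=.
  apply: (meet_once_split plane (n := n));
    rewrite ?card_imset ?card_side_true ?card_side_false //.
  - rewrite -setI_eq0 -imsetI; last by move=> x y _ _ /iphi.
    apply/eqP/setP => p; rewrite inE; apply/negP => /imsetP [x].
    by rewrite !inE => /andP [/eqP ->].
  - exact: (embedding_meet_once (c := true) emb).
  - exact: (embedding_meet_once (c := false) emb).
move=> /and3P [/eqP cardA /eqP cardB split].
have [phi iphi [EA EB]] := sides_image_surj cardA cardB (split_disjoint split).
exists phi; last by rewrite /sides_image EA EB.
rewrite inE; apply: meet_once_embedding => // c.
have /existsP [l1 /existsP [l2 /and3P [_ sA sB]]] := split.
by case: c; rewrite /= EA EB;
  [exact: (split_meet_once plane sA sB) | exact: (split_meet_once plane sB sA)].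
Qed.

End Embeddings.

Lemma card_dep_pairs (I J : finType) (X : {set I}) (F : I -> {set J}) :
  #|[set x : I * J | (x.1 \in X) && (x.2 \in F x.1)]| = \sum_(i in X) #|F i|.
Proof.
rewrite -sum1_card (partition_big fst (mem X)) => [|x]; last by rewrite inE => /andP [].
apply: eq_bigr => i iX; rewrite sum1dep_card.
have -> : [set x | (x \in [set x | (x.1 \in X) && (x.2 \in F x.1)]) && (x.1 == i)]
    = pair i @: F i.
  apply/setP => -[i' j]; rewrite !inE /=.
  apply/andP/imsetP => [[/andP [_ jF] /eqP ii']|[j' j'F [-> ->]]].
    by rewrite ii' in jF *; exists j.
  by rewrite j'F andbT; split.
by rewrite card_imset // => j j' [].
Qed.

Section Counting.
Variables (P L : finType) (inc : P -> L -> bool) (q : nat).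
Hypothesis plane : is_proj_plane inc q.
Variables (s t : nat).

Definition split_draws (ll : L * L) : {set {set P} * {set P}} :=
  setX [set A : {set P} | A \subset pts inc ll.1 :\: pts inc ll.2 & #|A| == s]
       [set B : {set P} | B \subset pts inc ll.2 :\: pts inc ll.1 & #|B| == t].

(* The pairs in [split_pairs] together with the two lines carrying them. *)
Definition lined_pairs : {set (L * L) * ({set P} * {set P})} :=
  [set x | (x.1 \in [set ll : L * L | ll.1 != ll.2]) && (x.2 \in split_draws x.1)].

Lemma card_lined_pairs : #|lined_pairs| = #|L| * #|L|.-1 * ('C(q, s) * 'C(q, t)).
Proof.
rewrite card_dep_pairs (eq_bigr (fun=> 'C(q, s) * 'C(q, t))); last first.
  move=> [l1 l2]; rewrite inE /= => l12.
  by rewrite cardsX !cards_draws !(card_ptsD plane) // eq_sym.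
rewrite sum_nat_const; congr (_ * _).
have -> : [set ll : L * L | ll.1 != ll.2]
    = [set ll | (ll.1 \in setT) && (ll.2 \in [set~ ll.1])].
  by apply/setP => -[l1 l2]; rewrite !inE eq_sym.
rewrite (card_dep_pairs setT (fun l : L => [set~ l])) (eq_bigr (fun=> #|L|.-1)).
  by rewrite sum_nat_const cardsT.
by move=> l _; rewrite cardsC1.
Qed.

Lemma card_split_pairs : 1 < s -> 1 < t ->
  #|split_pairs inc s t| = #|L| * #|L|.-1 * ('C(q, s) * 'C(q, t)).
Proof.
move=> s2 t2; rewrite -card_lined_pairs.
have -> : split_pairs inc s t = snd @: lined_pairs.
  apply/setP => -[A B]; rewrite inE /=; apply/idP/imsetP.
    move=> /and3P [cardA cardB /existsP [l1 /existsP [l2 /and3P [l12 sA sB]]]].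
    by exists ((l1, l2), (A, B)); rewrite // !inE /= l12 sA sB cardA cardB.
  move=> [[[l1 l2] [A' B']]]; rewrite !inE /=.
  move=> /and3P [l12 /andP [sA cardA] /andP [sB cardB]] [-> ->].
  by rewrite cardA cardB; apply/existsP; exists l1; apply/existsP; exists l2; rewrite l12 sA sB.
apply: card_in_imset => -[[l1 l2] [A B]] [[l1' l2'] [A' B']].
rewrite !inE /= => /and3P [_ /andP [sA /eqP cardA] /andP [sB /eqP cardB]].
move=> /and3P [_ /andP [sA' _] /andP [sB' _]] [EA EB]; subst A' B'.
have onl (S : {set P}) (l l' : L) : S \subset pts inc l :\: pts inc l' -> S \subset pts inc l.
  by move=> sS; apply: subset_trans sS (subsetDl _ _).
by rewrite (pts_line_uniq plane _ (onl _ _ _ sA) (onl _ _ _ sA'))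
  ?(pts_line_uniq plane _ (onl _ _ _ sB) (onl _ _ _ sB')) ?cardA ?cardB.
Qed.

End Counting.

Lemma card_upair_split_pairs (P L : finType) (inc : P -> L -> bool) s t : s != t ->
  #|[set upair AB | AB in split_pairs inc s t]| = #|split_pairs inc s t|.
Proof.
move=> st; apply: card_in_imset => -[A B] [C D].
rewrite !inE /= => /and3P [/eqP cardA /eqP cardB _] /and3P [/eqP cardC /eqP cardD _].
move=> /upair_inj [[-> ->] //|[AD _]].
by move: st; rewrite -cardA -cardD AD eqxx.
Qed.

Lemma card_split_pairs_diag (P L : finType) (inc : P -> L -> bool) s : 0 < s ->
  #|split_pairs inc s s| = 2 * #|[set upair AB | AB in split_pairs inc s s]|.
Proof.
move=> s0; rewrite -sum1_card (partition_big_imset (@upair P)) /= mulnC -sum_nat_const.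
apply: eq_bigr => _ /imsetP [[A B] AB_split ->]; rewrite sum1dep_card.
move: (AB_split); rewrite inE /= => /and3P [/eqP cardA /eqP cardB split].
have BA_split : (B, A) \in split_pairs inc s s.
  by rewrite inE /= cardA cardB eqxx split_on_linesC.
have AneqB : A != B.
  have /card_gt0P [a aA] : 0 < #|A| by rewrite cardA.
  by apply: contraTneq (split_disjoint split) => <-; apply/pred0Pn; exists a; rewrite /= aA.
have -> : [set x | (x \in split_pairs inc s s) && (upair x == upair (A, B))]
    = [set (A, B); (B, A)].
  apply/setP => -[C D]; rewrite inE in_set2; apply/andP/orP.
    by move=> [_ /eqP /upair_inj [[-> ->]|[-> ->]]]; [left | right].
  by case=> /eqP [-> ->]; rewrite ?AB_split ?BA_split /upair /= ?eqxx // setUC.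
by rewrite cards2; case: eqP => // -[AB _]; rewrite AB eqxx in AneqB.
Qed.

Theorem corollary4p6 (P L : finType) (inc : P -> L -> bool) (q n : nat) :
  is_proj_plane inc q -> q = (n + 1) ^ 2 ->
  (forall s t : nat, s <= q -> t <= q -> q - n < s -> q - n < t -> s <> t ->
     n_pi inc (Kst s t) = 2 * 'C(q ^ 2 + q + 1, 2) * 'C(q, s) * 'C(q, t)) /\
  (forall s : nat, s <= q -> q - n < s ->
     n_pi inc (Kst s s) = 'C(q ^ 2 + q + 1, 2) * 'C(q, s) ^ 2).
Proof.
move=> plane hq; have {}hq : q = n * n + 2 * n + 1 by rewrite hq; nia.
have line_pairs : #|L| * #|L|.-1 = 'C(q ^ 2 + q + 1, 2) * 2.
  by rewrite (card_lines plane) bin_ffact ffactnS ffactn1.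
have n_pi_upair s t : s <= q -> t <= q -> q - n < s -> q - n < t ->
    n_pi inc (Kst s t) = #|[set upair AB | AB in split_pairs inc s t]|.
  move=> sq tq qs qt.
  by rewrite n_pi_Kst -(sides_image_embeddings plane (n := n)) -?imset_comp //; nia.
have card_split s t : q - n < s -> q - n < t ->
    #|split_pairs inc s t| = 'C(q ^ 2 + q + 1, 2) * 2 * ('C(q, s) * 'C(q, t)).
  by move=> qs qt; rewrite (card_split_pairs plane) -?line_pairs //; nia.
split=> [s t sq tq qs qt st | s sq qs].
  rewrite n_pi_upair // card_upair_split_pairs ?card_split //; last exact/eqP.
  by rewrite [_ * 2]mulnC !mulnA.
have s1 : 1 < s by nia.
rewrite n_pi_upair //; apply/eqP; rewrite -(eqn_pmul2l (isT : 0 < 2)).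
rewrite -card_split_pairs_diag ?(card_split s s qs qs) ?(ltnW s1) //.
by rewrite mulnn [_ * 2]mulnC mulnA.
Qed.
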